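(* Let $V$ be a finite set of truth values containing distinct elements $1,0$, and let $\models$ be an intersective mixed consequence truth-relation with minimal representation $\models_{\mathcal{D}_p^1,\mathcal{D}_c^1}\cap\dots\cap\models_{\mathcal{D}_p^K,\mathcal{D}_c^K}$. Let $f:V^n\to V$ and let $\mathcal{B}^p,\mathcal{B}^c\subseteq\mathcal{P}(\{1,\dots,n\})\times\mathcal{P}(\{1,\dots,n\})$. Then $f$ satisfies the regularity rule $(\mathcal{B}^p,\mathcal{B}^c)$ at the level of truth values, i.e. for all $\gamma,\delta\subseteq V$ and $x_1,\dots,x_n\in V$: $\gamma\cup\{f(x_1,\dots,x_n)\}\models\delta$ iff for all $(B_p,B_c)\in\mathcal{B}^p$: $\gamma\cup\{x_i:i\in B_p\}\models\{x_i:i\in B_c\}\cup\delta$, and $\gamma\models\{f(x_1,\dots,x_n)\}\cup\delta$ iff for all $(B_p,B_c)\in\mathcal{B}^c$: $\gamma\cup\{x_i:i\in B_p\}\models\{x_i:i\in B_c\}\cup\delta$, if and only if for every $k\in\{1,\dots,K\}$ and all $x_1,\dots,x_n\in V$: $f(x_1,\dots,x_n)\notin\mathcal{D}_p^k$ iff for all $(B_p,B_c)\in\mathcal{B}^p$: ($\{x_i:i\in B_p\}\subseteq\mathcal{D}_p^k\Rightarrow\{x_i:i\in B_c\}\cap\mathcal{D}_c^k\neq\emptyset$); and $f(x_1,\dots,x_n)\in\mathcal{D}_c^k$ iff for all $(B_p,B_c)\in\mathcal{B}^c$: ($\{x_i:i\in B_p\}\subseteq\mathcal{D}_p^k\Rightarrow\{x_i:i\in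 B_c\}\cap\mathcal{D}_c^k\neq\emptyset$).
   Context: A set of designated values is a subset $\mathcal{D}\subseteq V$ with $1\in\mathcal{D}$, $0\notin\mathcal{D}$. For such $\mathcal{D}_p,\mathcal{D}_c$, the mixed consequence truth-relation is $\gamma\models_{\mathcal{D}_p,\mathcal{D}_c}\delta$ iff ($\gamma\subseteq\mathcal{D}_p\Rightarrow\delta\cap\mathcal{D}_c\neq\emptyset$), for $\gamma,\delta\subseteq V$. An intersective mixed consequence truth-relation is a finite intersection of mixed ones; a list of mixed relations whose intersection is it is a representation, and a minimal representation is one with the least possible number of members. Empty conjunctions count as true. *)

From mathcomp Require Import all_boot.
Set Implicit Arguments. Unset Strict Implicit. Unset Printing Implicit Defensive.

Section TruthRel.
Variable V : finType.

Definition designated (one zero : V) (D : {set V}) : Prop :=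
  one \in D /\ zero \notin D.

Definition mixed (Dp Dc : {set V}) (gamma delta : {set V}) : bool :=
  (gamma \subset Dp) ==> (delta :&: Dc != set0).

Definition represents (one zero : V)
  (rel : {set V} -> {set V} -> bool) (reps : seq ({set V} * {set V})) : Prop :=
  (forall p, p \in reps -> designated one zero p.1 /\ designated one zero p.2) /\
  (forall gamma delta,
     rel gamma delta = all (fun p => mixed p.1 p.2 gamma delta) reps).

Definition minimal_rep (one zero : V)
  (rel : {set V} -> {set V} -> bool) (reps : seq ({set V} * {set V})) : Prop :=
  represents one zero rel reps /\
  (forall reps', represents one zero rel reps' -> size reps <= size reps').

End TruthRel.

From mathcomp Require Import all_boot.
Set Implicit Arguments. Unset Strict Implicit. Unset Printing Implicit Defensive.

(* Through a representation, both sides of a regularity rule at (gamma, delta)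
   become conjunctions, over the members (Dp, Dc) that are active at
   (gamma, delta) -- those whose mixed relation fails there, i.e.
   gamma \subset Dp and delta disjoint from Dc --
   of the local condition at (Dp, Dc); so the local conditions imply the rule.
   Conversely, gamma := Dp^k and delta := ~: Dc^k activate member k, and
   minimality makes it the only active member: an active member (Dp', Dc')
   has Dp^k \subset Dp' and Dc' \subset Dc^k, so its mixed relation is
   contained in that of member k, which could then be dropped. *)

Section Mixed.
Variable V : finType.
Implicit Types (Dp Dc g d : {set V}) (a : V).

Lemma mixedUU Dp Dc g1 g2 d1 d2 :
  mixed Dp Dc (g1 :|: g2) (d1 :|: d2) = mixed Dp Dc g1 d1 || mixed Dp Dc g2 d2.
Proof.
rewrite /mixed subUset setIUl setU_eq0.
by case: (g1 \subset Dp); case: (g2 \subset Dp); case: (d1 :&: Dc == set0);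
  case: (d2 :&: Dc == set0).
Qed.

Lemma mixedU1l Dp Dc a g d :
  mixed Dp Dc (a |: g) d = (a \notin Dp) || mixed Dp Dc g d.
Proof.
by rewrite -{1}[d]set0U mixedUU {1}/mixed sub1set set0I eqxx implybF.
Qed.

Lemma mixedU1r Dp Dc a g d :
  mixed Dp Dc g (a |: d) = (a \in Dc) || mixed Dp Dc g d.
Proof.
rewrite -{1}[g]set0U mixedUU {1}/mixed sub0set /=; congr (_ || _).
apply/set0Pn/idP => [[b] | aDc]; first by rewrite !inE => /andP[/eqP ->].
by exists a; rewrite !inE eqxx.
Qed.

Lemma mixedS Dp Dc Dp' Dc' g d :
  Dp \subset Dp' -> Dc' \subset Dc -> mixed Dp' Dc' g d -> mixed Dp Dc g d.
Proof.
move=> sDp sDc /implyP mixed'; apply/implyP => /subset_trans/(_ sDp)/mixed'.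
by apply: contra => /eqP dDc0; rewrite -subset0 -dDc0 setIS.
Qed.

Lemma mixed_self_complN Dp Dc : ~~ mixed Dp Dc Dp (~: Dc).
Proof. by rewrite /mixed subxx setIC setICr eqxx. Qed.

End Mixed.

Lemma all_orl_single (T : eqType) (s : seq T) (P X : pred T) t :
  t \in s -> ~~ P t -> {in s, forall u, ~~ P u -> u = t} ->
  all (fun u => P u || X u) s = X t.
Proof.
move=> st Pt only_t; apply/allP/idP => [/(_ t st) | Xt u su].
  by rewrite (negbTE Pt).
by case: (boolP (P u)) => //= /(only_t u su) ->.
Qed.

Section Represented.
Variables (V : finType) (one zero : V).
Variables (rel : {set V} -> {set V} -> bool) (reps : seq ({set V} * {set V})).
Hypothesis reps_rel : represents one zero rel reps.

Let relE g d : rel g d = all (fun p => mixed p.1 p.2 g d) reps.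
Proof. by case: reps_rel. Qed.

Lemma represents_relU1l a g d :
  rel (a |: g) d = all (fun p => mixed p.1 p.2 g d || (a \notin p.1)) reps.
Proof. by rewrite relE; apply: eq_all => p; rewrite mixedU1l orbC. Qed.

Lemma represents_relU1r a g d :
  rel g (a |: d) = all (fun p => mixed p.1 p.2 g d || (a \in p.2)) reps.
Proof. by rewrite relE; apply: eq_all => p; rewrite mixedU1r orbC. Qed.

Lemma represents_forall_relUU (I : finType) (S : {set I}) (A B : I -> {set V}) g d :
  [forall i in S, rel (g :|: A i) (B i :|: d)] =
  all (fun p => mixed p.1 p.2 g d || [forall i in S, mixed p.1 p.2 (A i) (B i)])
      reps.
Proof.
apply/forallP/allP => [rel_gd p rp | mixed_gd i].
  apply/orP; case: (boolP (mixed p.1 p.2 g d)) => [|gdN]; [by left | right].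
  apply/forall_inP => i iS; move: (implyP (rel_gd i) iS).
  by rewrite relE [B i :|: d]setUC => /allP/(_ p rp); rewrite mixedUU (negbTE gdN).
apply/implyP => iS; rewrite relE [B i :|: d]setUC; apply/allP => p rp.
rewrite mixedUU; case/orP: (mixed_gd p rp) => [-> // | /forall_inP].
by move/(_ i iS) ->; rewrite orbT.
Qed.

End Represented.

Lemma minimal_rep_antichain (V : finType) (one zero : V) rel reps p q :
  minimal_rep one zero rel reps -> p \in reps -> q \in reps ->
  p.1 \subset q.1 -> q.2 \subset p.2 -> q = p.
Proof.
case=> [[reps_des relE] reps_min] rp rq sp1 sp2.
apply/eqP; apply/negPn/negP => qp.
have rem_rel : represents one zero rel (rem p reps).
  split=> [r /mem_rem | g d]; first exact: reps_des.
  rewrite relE (perm_all _ (perm_to_rem rp)) /=.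
  case rem_gd: (all _ (rem p reps)); rewrite ?andbF // andbT.
  by apply: mixedS sp1 sp2 _; apply: (allP rem_gd); rewrite (rem_mem qp).
have := reps_min _ rem_rel; rewrite size_rem //.
by case: (reps) rp => //= _ s _; rewrite ltnn.
Qed.

Lemma minimal_rep_only_active (V : finType) (one zero : V) rel reps p q :
  minimal_rep one zero rel reps -> p \in reps -> q \in reps ->
  ~~ mixed q.1 q.2 p.1 (~: p.2) -> q = p.
Proof.
move=> min rp rq; rewrite negb_imply negbK => /andP[sp1 q2p2].
by apply: minimal_rep_antichain min rp rq sp1 _; rewrite -setD_eq0 setDE setIC.
Qed.

Theorem theorem3p11 (V : finType) (one zero : V) (Hneq : one != zero)
  (rel : {set V} -> {set V} -> bool) (reps : seq ({set V} * {set V}))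
  (Hmin : minimal_rep one zero rel reps)
  (n : nat) (f : ('I_n -> V) -> V)
  (Bp Bc : {set ({set 'I_n} * {set 'I_n})}) :
  (forall (gamma delta : {set V}) (x : 'I_n -> V),
     (rel (f x |: gamma) delta =
        [forall B in Bp, rel (gamma :|: x @: B.1) (x @: B.2 :|: delta)]) /\
     (rel gamma (f x |: delta) =
        [forall B in Bc, rel (gamma :|: x @: B.1) (x @: B.2 :|: delta)]))
  <->
  (forall p, p \in reps -> forall x : 'I_n -> V,
     ((f x \notin p.1) =
        [forall B in Bp, (x @: B.1 \subset p.1) ==> (x @: B.2 :&: p.2 != set0)]) /\
     ((f x \in p.2) =
        [forall B in Bc, (x @: B.1 \subset p.1) ==> (x @: B.2 :&: p.2 != set0)])).
Proof.
have reps_rel := Hmin.1.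
have relUU x S := represents_forall_relUU reps_rel S
  (fun B : {set 'I_n} * {set 'I_n} => x @: B.1) (fun B => x @: B.2).
split=> [rule p rp x | local g d x].
  have [rule_p rule_c] := rule p.1 (~: p.2) x.
  have only_p X := all_orl_single (P := fun q => mixed q.1 q.2 p.1 (~: p.2)) X rp
    (mixed_self_complN _ _)
    (fun q rq => minimal_rep_only_active Hmin rp rq).
  rewrite (represents_relU1l reps_rel) relUU !only_p in rule_p.
  by rewrite (represents_relU1r reps_rel) relUU !only_p in rule_c.
rewrite (represents_relU1l reps_rel) (represents_relU1r reps_rel) !relUU.
by split; apply: eq_in_all => p rp; have [local_p local_c] := local p rp x;
  rewrite ?local_p ?local_c.
Qed.
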